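(* The hypergraph $\mathcal{H}$ (defined in the context) is linear, i.e. any two distinct edges of $\mathcal{H}$ share at most one vertex.
   Context: Let $r \geq 2$ and $l \geq 1$ be integers and $q$ a power of an odd prime. Let $\alpha_1, \dots, \alpha_r$ be distinct elements of $\mathbb{F}_q$, and let $m_1, \dots, m_l$ be distinct elements of $\mathbb{F}_q^* = \mathbb{F}_q\setminus\{0\}$ such that $m_s(\alpha_k - \alpha_i) \neq m_t(\alpha_k - \alpha_j)$ whenever $1 \leq s,t \leq l$ and $i,j,k$ are distinct integers in $\{1,\dots,r\}$. For $1 \leq i \leq r$ let $V_i = \mathbb{F}_q \times \mathbb{F}_q \times \{i\}$. For $x,y \in \mathbb{F}_q$, $a \in \mathbb{F}_q^*$, $s \in \{1,\dots,l\}$ let \[ e(x,y,a,m_s) = \{(x + \alpha_i m_s a,\; y + \alpha_i m_s a^2,\; i) : 1 \leq i \leq r\}. \] $\mathcal{H}$ is the $r$-uniform hypergraph with vertex set $V_1 \cup \dots \cup V_r$ and edge set $\{e(x,y,a,m_s) : x,y \in \mathbb{F}_q,\ a \in \mathbb{F}_q^*,\ 1 \leq s \leq l\}$. *)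

From HB Require Import structures.
From mathcomp Require Import all_boot all_order all_algebra.
Set Implicit Arguments. Unset Strict Implicit. Unset Printing Implicit Defensive.
Import GRing.Theory.
Local Open Scope ring_scope.

(* Vertices: V_i = F_q x F_q x {i}, indices i in 'I_r (i.e. {0..r-1} for {1..r}). *)
Definition hvertex (F : finFieldType) (r : nat) : finType :=
  (F * F * 'I_r)%type.

Definition hedge (F : finFieldType) (r : nat) (alpha : 'I_r -> F)
  (x y a m : F) : {set hvertex F r} :=
  [set ((x + alpha i * m * a, y + alpha i * m * a ^+ 2), i) | i : 'I_r].

Definition hedges (F : finFieldType) (r l : nat) (alpha : 'I_r -> F)
  (m : 'I_l -> F) : {set {set hvertex F r}} :=
  [set hedge alpha xya.1.1 xya.1.2 xya.2.1 (m xya.2.2)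
     | xya in [set u : F * F * (F * 'I_l) | u.2.1 != 0]].

Definition linear_hypergraph (T : finType) (E : {set {set T}}) : Prop :=
  forall e1 e2, e1 \in E -> e2 \in E -> e1 != e2 -> (#|e1 :&: e2| <= 1)%N.

From HB Require Import structures.
From mathcomp Require Import all_boot all_order all_algebra.
From mathcomp Require Import ring.
Import GRing.Theory.
Local Open Scope ring_scope.

(* Each edge e(x, y, a, m) is the graph over the indices of the pair of affine
   maps i |-> (x + alpha_i c, y + alpha_i d) with c = m a and d = m a^2, and an
   affine map is determined by its values at two distinct points alpha_i and
   alpha_j.  So two edges sharing two vertices have the same four parameters
   (x, y, c, d) and are equal as sets. *)

Lemma affine_eq_two_points {F : fieldType} {a b x x' c c' : F} :
  a != b -> x + a * c = x' + a * c' -> x + b * c = x' + b * c' ->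
  x = x' /\ c = c'.
Proof.
move=> neq_ab eq_a eq_b.
have : (a - b) * (c - c') = 0.
  transitivity ((x + a * c) - (x + b * c) - ((x' + a * c') - (x' + b * c'))).
    by ring.
  by rewrite eq_a eq_b subrr.
move/eqP; rewrite mulf_eq0 !subr_eq0 (negbTE neq_ab) /= => /eqP eq_c.
by split=> //; move: eq_a; rewrite eq_c => /addIr.
Qed.

Section AffineEdges.

Variables (F : finFieldType) (r : nat) (alpha : 'I_r -> F).

Definition affine_edge (x y c d : F) : {set hvertex F r} :=
  [set ((x + alpha i * c, y + alpha i * d), i) | i : 'I_r].

Lemma hedgeE (x y a m : F) :
  hedge alpha x y a m = affine_edge x y (m * a) (m * a ^+ 2).
Proof. by apply: eq_imset => i; rewrite !mulrA. Qed.

Lemma mem_affine_edge (x y c d : F) (u : hvertex F r) :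
  (u \in affine_edge x y c d) = (u.1 == (x + alpha u.2 * c, y + alpha u.2 * d)).
Proof.
apply/imsetP/eqP => [[i _ ->] // | eq_u1].
by exists u.2 => //; case: u eq_u1 => [[? ?] ?] /= ->.
Qed.

Hypothesis alpha_inj : injective alpha.

Lemma affine_edge_meet_le1 (x y c d x' y' c' d' : F) :
  affine_edge x y c d != affine_edge x' y' c' d' ->
  (#|affine_edge x y c d :&: affine_edge x' y' c' d'| <= 1)%N.
Proof.
rewrite leqNgt; apply: contra => /card_gt1P[u [v [u_in v_in neq_uv]]].
move: u_in v_in; rewrite !inE !mem_affine_edge.
case/andP=> /eqP u1 /eqP u1' /andP[/eqP v1 /eqP v1'].
have neq_alpha : alpha u.2 != alpha v.2.
  rewrite (inj_eq alpha_inj); apply: contraNneq neq_uv => eq_u2.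
  by apply/eqP; rewrite [u]surjective_pairing [v]surjective_pairing u1 v1 eq_u2.
move: u1' v1'; rewrite u1 v1 => -[ux uy] [vx vy].
have [<- <-] := affine_eq_two_points neq_alpha ux vx.
by have [<- <-] := affine_eq_two_points neq_alpha uy vy.
Qed.

End AffineEdges.

(* Linearity only uses that the alpha_i are distinct; the remaining hypotheses
   of the paper's construction are needed for other properties of H. *)
Theorem lemma3p5 (F : finFieldType) (r l : nat)
  (alpha : 'I_r -> F) (m : 'I_l -> F) :
  odd #|F| ->
  (2 <= r)%N -> (1 <= l)%N ->
  injective alpha -> injective m ->
  (forall s, m s != 0) ->
  (forall (s t : 'I_l) (i j k : 'I_r), i != j -> j != k -> i != k ->
     m s * (alpha k - alpha i) != m t * (alpha k - alpha j)) ->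
  linear_hypergraph (hedges alpha m).
Proof.
move=> _ _ _ alpha_inj _ _ _ e1 e2.
move=> /imsetP[[[x y] [a s]] _ ->] /imsetP[[[x' y'] [b t]] _ ->].
by rewrite !hedgeE; apply: affine_edge_meet_le1.
Qed.
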